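(* Let $\mathbf{F}:\ell^n\times\ell^m\to\ell^n$ be a strictly causal plant operator with components $F_0\equiv0$, $F_t(x_{t:0},u_{t:0})=f_t(x_{t-1:0},u_{t-1:0})$, and let $\mathbf{\Psi}=(\mathbf{\Psi}^x,\mathbf{\Psi}^u):\ell^n\to\ell^n\times\ell^m$ be causal with $\mathbf{\Psi}^x-\mathbf{I}$ strictly causal ($\mathbf{\Psi}$ is not assumed to be a closed-loop map). Fix $p$. Assume that $\mathbf{\Psi}$ and $\mathbf{F}$ are incrementally finite gain $\ell_p$-stable, and that the residual operator $$\mathbf{\Delta}[\mathbf{F},\mathbf{\Psi}]:=\mathbf{F}(\mathbf{\Psi})+\mathbf{I}-\mathbf{\Psi}^x:\ell^n\to\ell^n$$ is $(\gamma,\beta)$-incrementally finite gain $\ell_p$-stable with $\gamma<1$. Then, for every $\bm{\delta}^*\in\ell^n_p\times\ell^m_p\times\ell^n_p$, the perturbed closed-loop map $\mathbf{\Phi}_{S_1'}[\mathbf{F},\mathbf{\Psi}]$ is finite gain $\ell_p$-stable at $\bm{\delta}^*$.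
   Context: $\ell^n$ is the space of sequences in $\mathbb{R}^n$ indexed by $t=0,1,2,\dots$; $|\cdot|$ is a fixed norm on each $\mathbb{R}^k$; $\|\mathbf{x}\|_p=(\sum_{k\ge0}|x_k|^p)^{1/p}$ for $p<\infty$, $\|\mathbf{x}\|_\infty=\sup_k|x_k|$, and $\ell^n_p=\{\mathbf{x}\in\ell^n:\|\mathbf{x}\|_p<\infty\}$. On product spaces the norm is the sum, e.g. $\|(\mathbf{w},\mathbf{d},\mathbf{v})\|_p=\|\mathbf{w}\|_p+\|\mathbf{d}\|_p+\|\mathbf{v}\|_p$. Causal / strictly causal operators: $(\mathbf{A}(\mathbf{x}))_t=A_t(x_{t:0})$ with component functions $A_t$, strictly causal if $A_t$ does not depend on its first argument $x_t$; sums are pointwise, products are compositions, $\mathbf{F}(\mathbf{\Psi})$ means $\mathbf{w}\mapsto\mathbf{F}(\mathbf{\Psi}^x(\mathbf{w}),\mathbf{\Psi}^u(\mathbf{w}))$. An operator $\mathbf{A}$ between such spaces is: finite gain (f.g.) $\ell_p$-stable at $\mathbf{a}_0\in\ell_p$ if there are $\gamma,\beta\ge0$ with $\|\mathbf{A}(\mathbf{a})-\mathbf{A}(\mathbf{a}_0)\|_p\le\gamma\|\mathbf{a}-\mathbf{a}_0\|_p+\beta$ for all $\mathbf{a}\in\ell_p$; $(\gamma,\beta)$-incrementally finite gain (i.f.g.) $\ell_p$-stable if $\|\mathbf{A}(\mathbf{a})-\mathbf{A}(\mathbf{a}')\|_p\le\gamma\|\mathbf{a}-\mathbf{a}'\|_p+\beta$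 for all $\mathbf{a},\mathbf{a}'\in\ell_p$ (i.f.g. if this holds for some $\gamma,\beta\ge0$). The perturbed closed loop $S_1'$: given perturbations $\bm{\delta}=(\mathbf{w},\mathbf{d},\mathbf{v})\in\ell^n\times\ell^m\times\ell^n$, define recursively $x_0=w_0$, $x_t=f_t(x_{t-1:0},u_{t-1:0})+w_t$ ($t\ge1$), $\hat w_t=x_t+v_t-\Psi^x_t(0,\hat w_{t-1:0})$, $u_t=\Psi^u_t(\hat w_{t:0})+d_t$ (the controller with internal state $\hat{\mathbf{w}}$ is the ''system level controller'' parametrized by $\mathbf{\Psi}$). The map $\mathbf{\Phi}_{S_1'}[\mathbf{F},\mathbf{\Psi}]:\ell^n\times\ell^m\times\ell^n\to\ell^n\times\ell^m\times\ell^n$ is $\bm{\delta}\mapsto(\mathbf{x},\mathbf{u},\hat{\mathbf{w}})$. *)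

From HB Require Import structures.
From mathcomp Require Import all_boot all_order all_algebra.
From mathcomp Require Import all_classical all_reals all_analysis.
Set Implicit Arguments. Unset Strict Implicit. Unset Printing Implicit Defensive.
Import Order.TTheory GRing.Theory Num.Theory.
Local Open Scope ring_scope.

Section Defs.
Variable R : realType.

Definition sq (k : nat) := nat -> 'rV[R]_k.

Definition is_norm (k : nat) (N : 'rV[R]_k -> R) : Prop :=
  [/\ forall x y, N (x + y) <= N x + N y,
      forall (a : R) x, N (a *: x) = `|a| * N x
    & forall x, N x = 0 -> x = 0].

Definition ssub k (x y : sq k) : sq k := fun t => x t - y t.

Definition lpnorm k (N : 'rV[R]_k -> R) (p : \bar R) (x : sq k) : \bar R :=
  match p with
  | +oo%E => ereal_sup (range (fun t => (N (x t))%:E))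
  | r%:E => poweR (\sum_(0 <= t <oo) ((powR (N (x t)) r)%:E))%E r^-1
  | -oo%E => +oo%E
  end.

Definition inlp k N p (x : sq k) : Prop := (lpnorm N p x < +oo)%E.

Definition causal k l (A : sq k -> sq l) : Prop :=
  forall x y t, (forall s, (s <= t)%N -> x s = y s) -> A x t = A y t.
Definition strictly_causal k l (A : sq k -> sq l) : Prop :=
  forall x y t, (forall s, (s < t)%N -> x s = y s) -> A x t = A y t.
Definition strictly_causal2 k j l (A : sq k -> sq j -> sq l) : Prop :=
  forall x u y v t, (forall s, (s < t)%N -> x s = y s /\ u s = v s) ->
    A x u t = A y v t.

(* The perturbed closed loop S_1', defined recursively in time.
   traj T holds the trajectory (x, u, what) correct on times < T (zero after). *)
Fixpoint s1_traj n m (F : sq n -> sq m -> sq n) (Psix : sq n -> sq n)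
    (Psiu : sq n -> sq m) (w : sq n) (d : sq m) (v : sq n) (T : nat)
    : sq n * sq m * sq n :=
  match T with
  | 0%N => (fun _ => 0, fun _ => 0, fun _ => 0)
  | T'.+1 =>
    let: (xs, us, ws) := s1_traj F Psix Psiu w d v T' in
    let xT := F xs us T' + w T' in
    let wT := xT + v T' - Psix (fun s => if (s < T')%N then ws s else 0) T' in
    let ws' := fun s => if s == T' then wT else ws s in
    let uT := Psiu ws' T' + d T' in
    (fun s => if s == T' then xT else xs s,
     fun s => if s == T' then uT else us s, ws')
  end.

Definition Phi_S1 n m (F : sq n -> sq m -> sq n) (Psix : sq n -> sq n)
    (Psiu : sq n -> sq m) (delta : sq n * sq m * sq n) : sq n * sq m * sq n :=
  let: (w, d, v) := delta in
  (fun t => (s1_traj F Psix Psiu w d v t.+1).1.1 t,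
   fun t => (s1_traj F Psix Psiu w d v t.+1).1.2 t,
   fun t => (s1_traj F Psix Psiu w d v t.+1).2 t).

End Defs.

From HB Require Import structures.
From mathcomp Require Import all_boot all_order all_algebra.
From mathcomp Require Import all_classical all_reals all_analysis.
From mathcomp Require Import lra.
Import Order.TTheory GRing.Theory Num.Theory.
Set Implicit Arguments. Unset Strict Implicit. Unset Printing Implicit Defensive.
Local Open Scope ring_scope.

(* Along any closed-loop trajectory the controller's internal state what
   satisfies Psi^x(what) = x + v and u = Psi^u(what) + d, so that
     what = Delta(what) + [F(x, u) - F(Psi^x what, Psi^u what)] + w + v,
   where Delta = F(Psi) + I - Psi^x is the residual.  The bracket only depends
   on the prediction errors -v and d, hence is bounded through the i.f.g.
   stability of F; subtracting the equations of two trajectories gives a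
   contraction-type inequality for what - what' with rate gamma < 1.  Since a
   priori the trajectories need not lie in l_p, every estimate is made on
   truncations (which always are in l_p) and then passed to the supremum.
   Finally x and u are read off what through Psi. *)

Definition trunc (V : zmodType) (T : nat) (x : nat -> V) : nat -> V :=
  fun t => if (t < T)%N then x t else 0.

Lemma trunc_lt (V : zmodType) T (x : nat -> V) t : (t < T)%N -> trunc T x t = x t.
Proof. by rewrite /trunc => ->. Qed.

Lemma trunc_ge (V : zmodType) T (x : nat -> V) t : (T <= t)%N -> trunc T x t = 0.
Proof. by rewrite /trunc ltnNge => ->. Qed.

Section EllP.
Variable R : realType.
Local Open Scope ereal_scope.

Definition ellp (p : \bar R) (phi : nat -> R) : \bar R :=
  match p with
  | +oo%E => ereal_sup (range (fun t => (phi t)%:E))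
  | r%:E => poweR (\sum_(0 <= t <oo) ((powR (phi t) r)%:E))%E r^-1
  | -oo%E => +oo%E
  end.

Lemma series_ge0 (f : nat -> R) : (forall t, 0 <= f t)%R ->
  0 <= \sum_(0 <= t <oo) (f t)%:E.
Proof. by move=> f0; apply: nneseries_ge0 => t _ _; rewrite lee_fin. Qed.

Lemma ellp_ge0 p phi : (forall t, 0 <= phi t)%R -> 0 <= ellp p phi.
Proof.
move=> phi0; case: p => [r| |] /=; [exact: poweR_ge0| |by rewrite leey].
apply: le_trans (ereal_sup_ubound _); last by exists 0%N.
by rewrite lee_fin.
Qed.

Lemma ellp_le p phi psi : 1 <= p -> (forall t, 0 <= phi t <= psi t)%R ->
  ellp p phi <= ellp p psi.
Proof.
move=> p1 le_phi; case: p p1 => [r| |] //= p1.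
- have r0 : (0 < r)%R by move: p1; rewrite lee_fin => /(lt_le_trans ltr01).
  apply: gt0_ler_poweR; first by rewrite invr_ge0 ltW.
  + by rewrite in_itv /= leey andbT; apply: series_ge0 => t; exact: powR_ge0.
  + by rewrite in_itv /= leey andbT; apply: series_ge0 => t; exact: powR_ge0.
  apply: lee_nneseries => [t _ _|t _]; first by rewrite lee_fin powR_ge0.
  have /andP[phi0 phi_psi] := le_phi t.
  by rewrite lee_fin ge0_ler_powR ?nnegrE ?(ltW r0) ?(le_trans phi0 phi_psi).
- apply: ge_ereal_sup => _ [t _ <-].
  apply: le_trans (ereal_sup_ubound _); last by exists t.
  by rewrite lee_fin; have /andP[] := le_phi t.
Qed.

Lemma measurable_nat_fun (f : nat -> R) : measurable_fun [set: nat] f.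
Proof. by []. Qed.

Lemma ellp_Lnorm r phi : (0 < r)%R -> (forall t, 0 <= phi t)%R ->
  ellp r%:E phi = 'N[counting]_r%:E [EFin \o phi].
Proof.
move=> r0 phi0; rewrite Lnorm_counting //=; congr poweR.
by apply: congr_lim; apply/funext => T /=; apply: eq_bigr => t _; rewrite ger0_norm.
Qed.

Lemma ellp_add p phi psi : 1 <= p ->
  (forall t, 0 <= phi t)%R -> (forall t, 0 <= psi t)%R ->
  ellp p (fun t => phi t + psi t)%R <= ellp p phi + ellp p psi.
Proof.
move=> p1 phi0 psi0; case: p p1 => [r| |] // p1.
- have r1 : (1 <= r)%R by move: p1; rewrite lee_fin.
  have r0 : (0 < r)%R by exact: (lt_le_trans ltr01).
  rewrite !ellp_Lnorm // => [|t]; last by rewrite addr_ge0.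
  exact: minkowski_EFin (measurable_nat_fun phi) (measurable_nat_fun psi) r1.
- apply: ge_ereal_sup => _ [t _ <-]; rewrite EFinD.
  by apply: leeD; apply: ereal_sup_ubound; exists t.
Qed.

Lemma ellp_trunc_lty p phi T : 1 <= p -> (forall t, 0 <= phi t)%R ->
  ellp p (trunc T phi) < +oo.
Proof.
move=> p1 phi0; case: p p1 => [r| |] //= p1.
- have r0 : (0 < r)%R by move: p1; rewrite lee_fin => /(lt_le_trans ltr01).
  apply: poweR_lty.
  rewrite (@nneseries_split _ _ 0 T) => [|t _]; last by rewrite lee_fin powR_ge0.
  rewrite add0n eseries0 ?adde0 ?sumEFin ?ltry // => t Tt _.
  by rewrite trunc_ge // powR0 ?gt_eqF.
- apply: (@le_lt_trans _ _ (\sum_(0 <= s < T) phi s)%R%:E); last exact: ltry.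
  apply: ge_ereal_sup => _ [t _ <-]; rewrite lee_fin /trunc.
  case: ifPn => tT; last by rewrite sumr_ge0.
  rewrite (bigD1_seq t) /= ?mem_index_iota ?iota_uniq //.
  by rewrite lerDl sumr_ge0.
Qed.

Lemma ellp_le_trunc p phi c : 1 <= p -> (forall t, 0 <= phi t)%R ->
  (forall T, ellp p (trunc T phi) <= c) -> ellp p phi <= c.
Proof.
move=> p1 phi0 le_c; case: p p1 le_c => [r| |] //= p1 le_c.
- have r0 : (0 < r)%R by move: p1; rewrite lee_fin => /(lt_le_trans ltr01).
  have c0 : 0 <= c by apply: le_trans (le_c 0%N); apply: poweR_ge0.
  case: c c0 le_c => [c| |] // c0 le_c; last by rewrite leey.
  rewrite lee_fin in c0.
  have pow_ge0 (f : nat -> R) : 0 <= \sum_(0 <= t <oo) ((powR (f t) r)%:E).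
    by apply: series_ge0 => t; exact: powR_ge0.
  have series_le : \sum_(0 <= t <oo) ((powR (phi t) r)%:E) <= (powR c r)%:E.
    apply: lime_le; first by apply: is_cvg_nneseries => t _ _; rewrite lee_fin powR_ge0.
    apply: nearW => T.
    have partial_le : \sum_(0 <= t < T) (powR (phi t) r)%:E <=
                      \sum_(0 <= t <oo) ((powR (trunc T phi t) r)%:E).
      apply: le_trans (nneseries_lim_ge _ _); last by move=> t _ _; rewrite lee_fin powR_ge0.
      by rewrite !big_nat le_eqVlt; apply/orP; left; apply/eqP; apply: eq_bigr => t /andP[_ tT];
        rewrite trunc_lt.
    apply: le_trans partial_le _.
    have := le_c T => /(gt0_ler_poweR (ltW r0)).
    rewrite !in_itv /= !leey !andbT poweR_ge0 lee_fin c0 => /(_ isT isT).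
    by rewrite -poweRrM mulVf ?gt_eqF // poweRe1.
  have := gt0_ler_poweR (r := r^-1) _ _ _ series_le.
  rewrite invr_ge0 ltW // !in_itv /= !leey !andbT lee_fin powR_ge0 pow_ge0.
  by move=> /(_ isT isT isT); rewrite -powRrM mulfV ?gt_eqF // powRr1.
- apply: ge_ereal_sup => _ [t _ <-].
  by apply: le_trans (le_c t.+1); apply: ereal_sup_ubound; exists t; rewrite ?trunc_lt.
Qed.

End EllP.

Lemma trunc_ssub (R : realType) k T (a b : sq R k) :
  trunc T (ssub a b) = ssub (trunc T a) (trunc T b).
Proof. by apply/funext => t; rewrite /ssub /trunc; case: ifP; rewrite ?subr0. Qed.

Section SeqNorm.
Variables (R : realType) (k : nat) (N : 'rV[R]_k -> R).
Hypothesis normN : is_norm N.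
Variable p : \bar R.
Hypothesis p_ge1 : (1 <= p)%E.

Lemma norm_triangle x y : N (x + y) <= N x + N y.
Proof. by case: normN. Qed.

Lemma norm0 : N 0 = 0.
Proof. by case: normN => _ hZ _; rewrite -(scale0r 0) hZ normr0 mul0r. Qed.

Lemma norm_opp x : N (- x) = N x.
Proof. by case: normN => _ hZ _; rewrite -scaleN1r hZ normrN normr1 mul1r. Qed.

Lemma norm_ge0 x : 0 <= N x.
Proof.
have := norm_triangle x (- x); rewrite subrr norm0 norm_opp.
by rewrite -mulr2n pmulrn_lge0.
Qed.

Local Open Scope ereal_scope.

Lemma lpnormE (x : sq R k) : lpnorm N p x = ellp p (fun t => N (x t)).
Proof. by case: p. Qed.

Lemma lpnorm_ge0 (x : sq R k) : 0 <= lpnorm N p x.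
Proof. by rewrite lpnormE; apply: ellp_ge0 => t; exact: norm_ge0. Qed.

Lemma lpnorm_fin (x : sq R k) : inlp N p x -> lpnorm N p x = (fine (lpnorm N p x))%:E.
Proof. by move=> x_lp; rewrite fineK // ge0_fin_numE // lpnorm_ge0. Qed.

Lemma lpnorm_le2 (a b c : sq R k) : (forall t, N (a t) <= N (b t) + N (c t))%R ->
  lpnorm N p a <= lpnorm N p b + lpnorm N p c.
Proof.
move=> le_abc; rewrite !lpnormE.
apply: le_trans (ellp_add p_ge1 (fun t => norm_ge0 (b t)) (fun t => norm_ge0 (c t))).
by apply: ellp_le => // t; rewrite norm_ge0 le_abc.
Qed.

Lemma lpnorm_le (a b : sq R k) : (forall t, N (a t) <= N (b t))%R ->
  lpnorm N p a <= lpnorm N p b.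
Proof. by move=> le_ab; rewrite !lpnormE; apply: ellp_le => // t; rewrite norm_ge0 le_ab. Qed.

Lemma lpnorm_add (a b : sq R k) :
  lpnorm N p (fun t => a t + b t)%R <= lpnorm N p a + lpnorm N p b.
Proof. by apply: lpnorm_le2 => t; exact: norm_triangle. Qed.

Lemma lpnorm_sub (a b : sq R k) : lpnorm N p (ssub a b) <= lpnorm N p a + lpnorm N p b.
Proof. by apply: lpnorm_le2 => t; rewrite -(norm_opp (b t)); exact: norm_triangle. Qed.

Lemma lpnorm_sub_triangle (a b : sq R k) :
  lpnorm N p a <= lpnorm N p (ssub a b) + lpnorm N p b.
Proof. by apply: lpnorm_le2 => t; rewrite -{1}(subrK (b t) (a t)); exact: norm_triangle. Qed.

Lemma inlp_ssub (a b : sq R k) : inlp N p a -> inlp N p b -> inlp N p (ssub a b).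
Proof. by move=> a_lp b_lp; apply: le_lt_trans (lpnorm_sub a b) (lte_add_pinfty a_lp b_lp). Qed.

Lemma lpnorm_trunc T (x : sq R k) :
  lpnorm N p (trunc T x) = ellp p (trunc T (fun t => N (x t))).
Proof.
by rewrite lpnormE; congr ellp; apply/funext => t; rewrite /trunc; case: ifP; rewrite ?norm0.
Qed.

Lemma inlp_trunc T (x : sq R k) : inlp N p (trunc T x).
Proof. by rewrite /inlp lpnorm_trunc; apply: ellp_trunc_lty => // t; exact: norm_ge0. Qed.

Lemma lpnorm_trunc_agree T (a b : sq R k) : (forall t, (t < T)%N -> a t = b t) ->
  lpnorm N p (trunc T a) <= lpnorm N p b.
Proof.
move=> ab; apply: lpnorm_le => t; case: (ltnP t T) => tT.
  by rewrite trunc_lt // ab.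
by rewrite trunc_ge // norm0 norm_ge0.
Qed.

Lemma lpnorm_le_trunc (x : sq R k) c :
  (forall T, lpnorm N p (trunc T x) <= c) -> lpnorm N p x <= c.
Proof.
move=> le_c; rewrite lpnormE; apply: ellp_le_trunc => // [t|T]; first exact: norm_ge0.
by rewrite -lpnorm_trunc.
Qed.

End SeqNorm.

Definition ifg_stable (R : realType) k l (Nk : 'rV[R]_k -> R) (Nl : 'rV[R]_l -> R)
    (p : \bar R) (A : sq R k -> sq R l) (g b : R) : Prop :=
  forall a a', inlp Nk p a -> inlp Nk p a' ->
    (lpnorm Nl p (ssub (A a) (A a')) <= g%:E * lpnorm Nk p (ssub a a') + b%:E)%E.

(* A causal i.f.g. stable operator satisfies the same estimate on the truncations
   of arbitrary (not necessarily l_p) inputs: truncation makes any input l_p. *)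
Lemma ifg_stable_trunc (R : realType) k l (Nk : 'rV[R]_k -> R) (Nl : 'rV[R]_l -> R)
    (p : \bar R) (A : sq R k -> sq R l) (g b : R) :
  is_norm Nk -> is_norm Nl -> (1 <= p)%E -> causal A -> ifg_stable Nk Nl p A g b ->
  forall a a' T, (lpnorm Nl p (trunc T (ssub (A a) (A a')))
    <= g%:E * lpnorm Nk p (trunc T (ssub a a')) + b%:E)%E.
Proof.
move=> normNk normNl p_ge1 A_causal A_ifg a a' T.
rewrite [in X in (_ <= X)%E]trunc_ssub.
apply: le_trans (A_ifg _ _ (inlp_trunc normNk p_ge1 T a) (inlp_trunc normNk p_ge1 T a')).
apply: lpnorm_trunc_agree => // t tT; rewrite /ssub.
by congr (_ - _); apply: A_causal => s st; rewrite trunc_lt // (leq_ltn_trans st tT).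
Qed.

Section ClosedLoop.
Variables (R : realType) (n m : nat).
Variables (F : sq R n -> sq R m -> sq R n) (Psix : sq R n -> sq R n) (Psiu : sq R n -> sq R m).
Variables (w : sq R n) (d : sq R m) (v : sq R n).

Local Notation traj := (s1_traj F Psix Psiu w d v).

Definition loop_x : sq R n := fun t => (traj t.+1).1.1 t.
Definition loop_u : sq R m := fun t => (traj t.+1).1.2 t.
Definition loop_w : sq R n := fun t => (traj t.+1).2 t.

Lemma traj_step T s : s != T ->
  [/\ (traj T.+1).1.1 s = (traj T).1.1 s, (traj T.+1).1.2 s = (traj T).1.2 s
    & (traj T.+1).2 s = (traj T).2 s].
Proof. by move=> sT /=; case: (traj T) => [[xs us] ws] /=; rewrite (negbTE sT). Qed.

Lemma traj_final T s : (s < T)%N ->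
  [/\ (traj T).1.1 s = loop_x s, (traj T).1.2 s = loop_u s & (traj T).2 s = loop_w s].
Proof.
elim: T => // T IH; rewrite ltnS leq_eqVlt => /orP[/eqP -> //|sT].
have [-> -> ->] := traj_step (negbT (ltn_eqF sT)).
exact: IH.
Qed.

Lemma loop_x_eq : strictly_causal2 F -> forall t, loop_x t = F loop_x loop_u t + w t.
Proof.
move=> F_sc t; have final := @traj_final t.
rewrite {1}/loop_x /=; move: final; case: (traj t) => [[xs us] ws] /= final.
by rewrite eqxx; congr (_ + _); apply: F_sc => s st; have [-> -> _] := final s st.
Qed.

Lemma loop_u_eq : causal Psiu -> forall t, loop_u t = Psiu loop_w t + d t.
Proof.
move=> Psiu_causal t; have final := @traj_final t.
have what_t : loop_w t = (traj t.+1).2 t by [].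
rewrite {1}/loop_u /=; move: final what_t => /=; case: (traj t) => [[xs us] ws] /= final what_t.
rewrite eqxx; congr (_ + _); apply: Psiu_causal => s; rewrite leq_eqVlt => /orP[/eqP ->|st].
  by rewrite eqxx what_t eqxx.
by rewrite (ltn_eqF st); have [_ _ ->] := final s st.
Qed.

Lemma loop_w_eq : strictly_causal (fun w => ssub (Psix w) w) ->
  forall t, Psix loop_w t = loop_x t + v t.
Proof.
move=> Psix_sc t.
set past := fun s => if (s < t)%N then loop_w s else 0.
have what_t : loop_w t = loop_x t + v t - Psix past t.
  rewrite /loop_w /loop_x /=; move: (@traj_final t); rewrite /past.
  case: (traj t) => [[xs us] ws] /= final.
  rewrite /= !eqxx; congr (_ - Psix _ t); apply/funext => s; case: ifP => // st.
  by have [_ _ ->] := final s st.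
have past_t : past t = 0 by rewrite /past ltnn.
have Psix_past : Psix past t - past t = Psix loop_w t - loop_w t.
  by apply: (Psix_sc past loop_w t) => s st; rewrite /past st.
rewrite past_t subr0 in Psix_past; rewrite Psix_past in what_t.
by move/eqP: what_t; rewrite eq_sym subr_eq subrKC => /eqP.
Qed.

End ClosedLoop.

Arguments loop_x_eq {R n m F Psix Psiu w d v}.
Arguments loop_u_eq {R n m F Psix Psiu w d v}.
Arguments loop_w_eq {R n m F Psix Psiu w d v}.

Lemma ifg_output_bound (R : realType) (N : forall k : nat, 'rV[R]_k -> R) (p : \bar R) n k
    (A : sq R n -> sq R k) (g b : R) (W W' : sq R n) (y y' e e' : sq R k) :
  is_norm (N n) -> is_norm (N k) -> (1 <= p)%E -> 0 <= g ->
  causal A -> ifg_stable (N n) (N k) p A g b ->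
  (forall t, N k (y t - y' t) <= N k (A W t - A W' t) + N k (e t - e' t)) ->
  (lpnorm (N k) p (ssub y y')
    <= g%:E * lpnorm (N n) p (ssub W W') + b%:E + lpnorm (N k) p (ssub e e'))%E.
Proof.
move=> normNn normNk p_ge1 g0 A_causal A_ifg le_y.
apply: (lpnorm_le_trunc normNk p_ge1) => T.
apply: le_trans (lpnorm_le2 normNk p_ge1 (b := trunc T (ssub (A W) (A W'))) (c := ssub e e') _) _.
  move=> t; case: (ltnP t T) => tT; first by rewrite !trunc_lt //; apply: le_y.
  by rewrite !trunc_ge // norm0 // addr_ge0 ?norm_ge0.
apply: leeD2r; apply: le_trans (ifg_stable_trunc normNn normNk p_ge1 A_causal A_ifg W W' T) _.
apply: leeD2r; apply: lee_wpmul2l; first by rewrite lee_fin.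
exact: (lpnorm_trunc_agree normNn p_ge1).
Qed.

Lemma contraction_le (R : realType) (x : \bar R) (g c : R) : g < 1 -> (x < +oo)%E ->
  (x <= g%:E * x + c%:E)%E -> (x <= (c / (1 - g))%:E)%E.
Proof.
move=> g1; case: x => [x _| //|_ _]; last exact: leNye.
by rewrite -EFinM -EFinD !lee_fin ler_pdivlMr ?subr_gt0 //; nra.
Qed.

Section Stability.
(* Keep the dimension argument of the family of norms N explicit. *)
Unset Implicit Arguments.
Variables (R : realType) (N : forall k : nat, 'rV[R]_k -> R).
Set Implicit Arguments.
Hypothesis normN : forall k : nat, is_norm (N k).
Variable p : \bar R.
Hypothesis p_ge1 : (1 <= p)%E.
Variables (n m : nat).
Variables (F : sq R n -> sq R m -> sq R n) (Psix : sq R n -> sq R n) (Psiu : sq R n -> sq R m).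
Hypothesis F_sc : strictly_causal2 F.
Hypothesis Psix_causal : causal Psix.
Hypothesis Psiu_causal : causal Psiu.
Hypothesis Psix_sc : strictly_causal (fun w => ssub (Psix w) w).
Variables (gF bF ga be : R).
Hypothesis gF_ge0 : 0 <= gF.
Hypothesis ga_lt1 : ga < 1.
Hypothesis F_ifg : forall x u x' u', inlp (N n) p x -> inlp (N m) p u ->
  inlp (N n) p x' -> inlp (N m) p u' ->
  (lpnorm (N n) p (ssub (F x u) (F x' u'))
    <= gF%:E * (lpnorm (N n) p (ssub x x') + lpnorm (N m) p (ssub u u')) + bF%:E)%E.

Local Notation xcl w d v := (loop_x F Psix Psiu w d v).
Local Notation ucl w d v := (loop_u F Psix Psiu w d v).
Local Notation wcl w d v := (loop_w F Psix Psiu w d v).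
Local Notation nrm k a := (lpnorm (N k) p a).

Definition residual : sq R n -> sq R n :=
  fun w t => F (Psix w) (Psiu w) t + w t - Psix w t.

Hypothesis residual_ifg : ifg_stable (N n) (N n) p residual ga be.

(* Delta is causal: F is strictly causal and Psi is causal. *)
Lemma residual_causal : causal residual.
Proof.
move=> a b t ab; rewrite /residual (Psix_causal ab) (ab t (leqnn t)).
congr (_ + _ - _); apply: F_sc => s st.
by split; [apply: Psix_causal | apply: Psiu_causal] => r rs;
  apply: ab; exact: leq_trans rs (ltnW st).
Qed.

Lemma F_trunc T a b t : (t < T)%N -> F (trunc T a) (trunc T b) t = F a b t.
Proof. by move=> tT; apply: F_sc => s st; rewrite !trunc_lt // (ltn_trans st tT). Qed.

(* Up to time T, the gap between the plant's response to the actual trajectory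
   and its response to the controller's prediction (Psi^x, Psi^u)(what);
   truncation makes all arguments of F lie in l_p. *)
Definition mismatch T w d v : sq R n :=
  ssub (F (trunc T (xcl w d v)) (trunc T (ucl w d v)))
       (F (trunc T (Psix (wcl w d v))) (trunc T (Psiu (wcl w d v)))).

(* The prediction errors are exactly -v and d, so the mismatch is small. *)
Lemma mismatch_bound T w d v :
  (nrm n (mismatch T w d v) <= gF%:E * (nrm n v + nrm m d) + bF%:E)%E.
Proof.
have trunc_diff_le k (a b : sq R k) c : (forall t, N k (a t - b t) <= N k (c t)) ->
    (lpnorm (N k) p (ssub (trunc T a) (trunc T b)) <= lpnorm (N k) p c)%E.
  move=> le_abc; apply: (lpnorm_le (normN k) p_ge1) => t; rewrite /ssub.
  case: (ltnP t T) => tT; first by rewrite !trunc_lt.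
  by rewrite !trunc_ge // subr0 norm0 ?norm_ge0.
apply: le_trans (F_ifg
  (inlp_trunc (normN n) p_ge1 _ _) (inlp_trunc (normN m) p_ge1 _ _)
  (inlp_trunc (normN n) p_ge1 _ _) (inlp_trunc (normN m) p_ge1 _ _)) _.
apply: leeD2r; apply: lee_wpmul2l; first by rewrite lee_fin.
apply: leeD; apply: trunc_diff_le => t.
  by rewrite (loop_w_eq Psix_sc) opprD addrA subrr sub0r norm_opp.
by rewrite (loop_u_eq Psiu_causal) [_ + d t]addrC addrK.
Qed.

Lemma what_decomposition T w d v t : (t < T)%N ->
  wcl w d v t = residual (wcl w d v) t + mismatch T w d v t + w t + v t.
Proof.
move=> tT; rewrite /residual /mismatch /ssub !F_trunc // (loop_w_eq Psix_sc) (loop_x_eq F_sc).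
by apply/rowP => i; rewrite !mxE; lra.
Qed.

Lemma what_trunc_bound w d v w' d' v' T :
  (nrm n (trunc T (ssub (wcl w d v) (wcl w' d' v')))
    <= ga%:E * nrm n (trunc T (ssub (wcl w d v) (wcl w' d' v'))) + be%:E
       + (gF%:E * (nrm n v + nrm m d) + bF%:E + (gF%:E * (nrm n v' + nrm m d') + bF%:E)
          + (nrm n (ssub w w') + nrm n (ssub v v'))))%E.
Proof.
set W := wcl w d v; set W' := wcl w' d' v'.
set D := trunc T (ssub (residual W) (residual W')).
set G := ssub (mismatch T w d v) (mismatch T w' d' v').
set E := fun t => (ssub w w' t + ssub v v' t)%R.
apply: le_trans (lpnorm_trunc_agree (normN n) p_ge1 (b := fun t => D t + (G t + E t))%R _) _.
  move=> t tT; rewrite /D /G /E /ssub trunc_lt // /W /W'.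
  rewrite (what_decomposition w d v tT) (what_decomposition w' d' v' tT).
  by apply/rowP => i; rewrite !mxE; lra.
apply: le_trans (lpnorm_add (normN n) p_ge1 _ _) _; apply: leeD.
  exact: (ifg_stable_trunc (normN n) (normN n) p_ge1 residual_causal residual_ifg).
apply: le_trans (lpnorm_add (normN n) p_ge1 _ _) _; apply: leeD.
  by apply: le_trans (lpnorm_sub (normN n) p_ge1 _ _) _; apply: leeD; exact: mismatch_bound.
exact: lpnorm_add.
Qed.

Definition what_bound_const (ew ev s s' : R) : R :=
  (be + (gF * s + bF + (gF * s' + bF)) + (ew + ev)) / (1 - ga).

(* Solving the contraction inequality on each truncation bounds the internal
   states, given real bounds on the size of the perturbations. *)
Lemma what_bound w d v w' d' v' (ew ev s s' : R) :
  (nrm n (ssub w w') <= ew%:E)%E -> (nrm n (ssub v v') <= ev%:E)%E ->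
  (nrm n v + nrm m d <= s%:E)%E -> (nrm n v' + nrm m d' <= s'%:E)%E ->
  (nrm n (ssub (wcl w d v) (wcl w' d' v'))
    <= (what_bound_const ew ev s s')%:E)%E.
Proof.
move=> le_ew le_ev le_s le_s'.
have mismatch_le a c : (a <= c%:E)%E -> (gF%:E * a + bF%:E <= (gF * c + bF)%:E)%E.
  by move=> le_ac; rewrite EFinD EFinM; apply: leeD2r; apply: lee_wpmul2l; rewrite ?lee_fin.
apply: (lpnorm_le_trunc (normN n) p_ge1) => T.
apply: (contraction_le ga_lt1 (inlp_trunc (normN n) p_ge1 _ _)).
apply: le_trans (what_trunc_bound w d v w' d' v' T) _.
rewrite -addeA !EFinD; apply: leeD2l; rewrite -[X in (_ <= X)%E]addeA; apply: leeD2l.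
by apply: leeD; [apply: leeD; rewrite -EFinD; exact: mismatch_le|exact: leeD].
Qed.

Variables (gP bP : R).
Hypothesis gP_ge0 : 0 <= gP.
Hypothesis Psi_ifg : forall w w', inlp (N n) p w -> inlp (N n) p w' ->
  (lpnorm (N n) p (ssub (Psix w) (Psix w')) + lpnorm (N m) p (ssub (Psiu w) (Psiu w'))
    <= gP%:E * lpnorm (N n) p (ssub w w') + bP%:E)%E.

Lemma Psix_ifg : ifg_stable (N n) (N n) p Psix gP bP.
Proof.
move=> a a' a_lp a'_lp; apply: le_trans (Psi_ifg a_lp a'_lp).
by apply: leeDl; exact: lpnorm_ge0.
Qed.

Lemma Psiu_ifg : ifg_stable (N n) (N m) p Psiu gP bP.
Proof.
move=> a a' a_lp a'_lp; apply: le_trans (Psi_ifg a_lp a'_lp).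
by apply: leeDr; exact: lpnorm_ge0.
Qed.

(* The state and input are read off the internal state through Psi:
   x = Psi^x(what) - v and u = Psi^u(what) + d; combined with what_bound this
   bounds the whole incremental response of the closed loop. *)
Lemma closed_loop_bound w d v w' d' v' (ew ed ev s s' : R) :
  (nrm n (ssub w w') <= ew%:E)%E -> (nrm m (ssub d d') <= ed%:E)%E ->
  (nrm n (ssub v v') <= ev%:E)%E ->
  (nrm n v + nrm m d <= s%:E)%E -> (nrm n v' + nrm m d' <= s'%:E)%E ->
  let K := what_bound_const ew ev s s' in
  (nrm n (ssub (xcl w d v) (xcl w' d' v')) + nrm m (ssub (ucl w d v) (ucl w' d' v'))
     + nrm n (ssub (wcl w d v) (wcl w' d' v'))
    <= (gP * K + bP + ev + (gP * K + bP + ed) + K)%:E)%E.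
Proof.
move=> le_ew le_ed le_ev le_s le_s' /=.
set K := what_bound_const ew ev s s'.
have le_W : (nrm n (ssub (wcl w d v) (wcl w' d' v')) <= K%:E)%E by exact: what_bound.
have le_out k (e : sq R k) c : (nrm k e <= c%:E)%E ->
    (gP%:E * nrm n (ssub (wcl w d v) (wcl w' d' v')) + bP%:E + nrm k e
      <= (gP * K + bP + c)%:E)%E.
  move=> le_e; rewrite !EFinD EFinM; apply: leeD => //; apply: leeD2r.
  by apply: lee_wpmul2l; rewrite ?lee_fin.
have le_x : (nrm n (ssub (xcl w d v) (xcl w' d' v'))
    <= gP%:E * nrm n (ssub (wcl w d v) (wcl w' d' v')) + bP%:E + nrm n (ssub v v'))%E.
  apply: (ifg_output_bound (normN n) (normN n) p_ge1 gP_ge0 Psix_causal Psix_ifg) => t.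
  rewrite !(loop_w_eq Psix_sc) -(norm_opp (normN n) (v t - v' t)).
  have -> : (xcl w d v t - xcl w' d' v' t
      = xcl w d v t + v t - (xcl w' d' v' t + v' t) + - (v t - v' t))%R.
    by apply/rowP => i; rewrite !mxE; lra.
  exact: (norm_triangle (normN n)).
have le_u : (nrm m (ssub (ucl w d v) (ucl w' d' v'))
    <= gP%:E * nrm n (ssub (wcl w d v) (wcl w' d' v')) + bP%:E + nrm m (ssub d d'))%E.
  apply: (ifg_output_bound (normN n) (normN m) p_ge1 gP_ge0 Psiu_causal Psiu_ifg) => t.
  rewrite !(loop_u_eq Psiu_causal) opprD addrACA.
  exact: (norm_triangle (normN m)).
apply: le_trans (leeD (leeD (le_trans le_x (le_out _ _ _ le_ev))
  (le_trans le_u (le_out _ _ _ le_ed))) le_W) _.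
by rewrite -!EFinD.
Qed.
End Stability.

(* The affine bound of closed_loop_bound, for perturbations around delta* with
   ||v*|| = cv and ||d*|| = cd, rearranged into gain * ||delta - delta*|| + bias. *)
Lemma closed_loop_gain_le (R : realType) (gP bP gF bF ga be ew ed ev cv cd : R) :
  0 <= gP -> 0 <= gF -> ga < 1 -> 0 <= ew -> 0 <= ed -> 0 <= ev ->
  let K := what_bound_const gF bF ga be ew ev (ev + cv + (ed + cd)) (cv + cd) in
  (gP * K + bP + ev + (gP * K + bP + ed) + K
    <= ((2 * gP + 1) * (1 + gF) / (1 - ga) + 1) * (ew + ed + ev)
       + ((2 * gP + 1) * (be + 2 * bF + 2 * gF * (cv + cd)) / (1 - ga) + 2 * bP))%R.
Proof.
move=> gP0 gF0 ga1 ew0 ed0 ev0 /=.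
set q := (1 - ga)^-1.
have q0 : 0 <= q by rewrite invr_ge0 subr_ge0 ltW.
have q_gain : 0 <= (2 * gP + 1) * q by rewrite mulr_ge0 // addr_ge0 // mulr_ge0.
have slack : 0 <= ed + gF * ew by rewrite addr_ge0 // mulr_ge0.
have := mulr_ge0 q_gain slack.
rewrite /what_bound_const -/q !mulrA; nra.
Qed.

Theorem theorem2 (R : realType) (N : forall k : nat, 'rV[R]_k -> R)
  (p : \bar R) (n m : nat)
  (F : sq R n -> sq R m -> sq R n) (Psix : sq R n -> sq R n) (Psiu : sq R n -> sq R m) :
  (forall k, is_norm (N k)) ->
  (1 <= p)%E ->
  (* F strictly causal plant with F_0 = 0 *)
  strictly_causal2 F ->
  (forall x u, F x u 0%N = 0) ->
  (* Psi causal, Psi^x - I strictly causal *)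
  causal Psix -> causal Psiu ->
  strictly_causal (fun w => ssub (Psix w) w) ->
  (* Psi incrementally finite gain l_p-stable *)
  (exists g b : R, 0 <= g /\ 0 <= b /\
     forall w w', inlp (N n) p w -> inlp (N n) p w' ->
       (lpnorm (N n) p (ssub (Psix w) (Psix w'))
        + lpnorm (N m) p (ssub (Psiu w) (Psiu w'))
        <= g%:E * lpnorm (N n) p (ssub w w') + b%:E)%E) ->
  (* F incrementally finite gain l_p-stable *)
  (exists g b : R, 0 <= g /\ 0 <= b /\
     forall x u x' u', inlp (N n) p x -> inlp (N m) p u ->
       inlp (N n) p x' -> inlp (N m) p u' ->
       (lpnorm (N n) p (ssub (F x u) (F x' u'))
        <= g%:E * (lpnorm (N n) p (ssub x x') + lpnorm (N m) p (ssub u u'))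
           + b%:E)%E) ->
  (* residual Delta = F(Psi) + I - Psi^x is (gamma,beta)-i.f.g. with gamma < 1 *)
  (exists gamma beta : R, 0 <= gamma /\ gamma < 1 /\ 0 <= beta /\
     let Delta := fun w : sq R n => fun t => F (Psix w) (Psiu w) t + w t - Psix w t in
     forall w w', inlp (N n) p w -> inlp (N n) p w' ->
       (lpnorm (N n) p (ssub (Delta w) (Delta w'))
        <= gamma%:E * lpnorm (N n) p (ssub w w') + beta%:E)%E) ->
  (* conclusion: Phi_{S1'} f.g. l_p-stable at every delta* in l_p *)
  forall (ws : sq R n) (ds : sq R m) (vs : sq R n),
    inlp (N n) p ws -> inlp (N m) p ds -> inlp (N n) p vs ->
    exists g b : R, 0 <= g /\ 0 <= b /\
      forall (w : sq R n) (d : sq R m) (v : sq R n),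
        inlp (N n) p w -> inlp (N m) p d -> inlp (N n) p v ->
        let Y := Phi_S1 F Psix Psiu (w, d, v) in
        let Ys := Phi_S1 F Psix Psiu (ws, ds, vs) in
        (lpnorm (N n) p (ssub Y.1.1 Ys.1.1) + lpnorm (N m) p (ssub Y.1.2 Ys.1.2)
         + lpnorm (N n) p (ssub Y.2 Ys.2)
         <= g%:E * (lpnorm (N n) p (ssub w ws) + lpnorm (N m) p (ssub d ds)
                    + lpnorm (N n) p (ssub v vs)) + b%:E)%E.
Proof.
move=> normN p_ge1 F_sc _ Psix_causal Psiu_causal Psix_sc
  [gP [bP [gP0 [bP0 Psi_ifg]]]] [gF [bF [gF0 [bF0 F_ifg]]]]
  [ga [be [_ [ga1 [be0 Delta_ifg]]]]] ws ds vs ws_lp ds_lp vs_lp.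
have fin k := lpnorm_fin (normN k) (p := p).
have fine0 k (x : sq R k) : 0 <= fine (lpnorm (N k) p x) by rewrite fine_ge0 ?lpnorm_ge0.
set cv := fine (lpnorm (N n) p vs); set cd := fine (lpnorm (N m) p ds).
have q0 : 0 <= (1 - ga)^-1 by rewrite invr_ge0 subr_ge0 ltW.
exists ((2 * gP + 1) * (1 + gF) / (1 - ga) + 1),
  ((2 * gP + 1) * (be + 2 * bF + 2 * gF * (cv + cd)) / (1 - ga) + 2 * bP).
split; first by rewrite addr_ge0 // !mulr_ge0 // addr_ge0 // mulr_ge0.
split; first by rewrite addr_ge0 ?mulr_ge0 // ?addr_ge0 ?mulr_ge0 // ?addr_ge0 ?fine0.
move=> w d v w_lp d_lp v_lp /=.
have dist_eq k (x xs : sq R k) : inlp (N k) p x -> inlp (N k) p xs ->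
    lpnorm (N k) p (ssub x xs) = (fine (lpnorm (N k) p (ssub x xs)))%:E.
  by move=> x_lp xs_lp; apply: fin; exact: (inlp_ssub (normN k)).
have [ew_eq ed_eq ev_eq] := And3 (dist_eq _ _ _ w_lp ws_lp) (dist_eq _ _ _ d_lp ds_lp)
  (dist_eq _ _ _ v_lp vs_lp).
set ew := fine _ in ew_eq; set ed := fine _ in ed_eq; set ev := fine _ in ev_eq.
have le_v : (lpnorm (N n) p v <= (ev + cv)%:E)%E.
  by rewrite EFinD -ev_eq -fin //; exact: (lpnorm_sub_triangle (normN n)).
have le_d : (lpnorm (N m) p d <= (ed + cd)%:E)%E.
  by rewrite EFinD -ed_eq -fin //; exact: (lpnorm_sub_triangle (normN m)).
apply: le_trans (@closed_loop_bound R N normN p p_ge1 n m F Psix Psiu F_sc Psix_causal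
  Psiu_causal Psix_sc gF bF ga be gF0 ga1 F_ifg Delta_ifg gP bP gP0 Psi_ifg
  w d v ws ds vs ew ed ev (ev + cv + (ed + cd)) (cv + cd) _ _ _ _ _) _;
  rewrite ?ew_eq ?ed_eq ?ev_eq //; first by rewrite EFinD leeD.
  by rewrite EFinD -!fin.
by rewrite -!EFinD lee_fin; apply: closed_loop_gain_le; rewrite ?fine0.
Qed.
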